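(* For $\mu\ge0$ let $s(t,\mu)$ be the solution of $s'(t)+\mu(1+kD^\alpha_{0^+})s(t)=0$ for $t>0$, $s(0)=1$ (equivalently of $s(t)+\mu\int_0^th(t-\tau)s(\tau)d\tau=1$ with $h(t)=1+\frac{kt^{-\alpha}}{\Gamma(1-\alpha)}$). Then there is a constant $C>0$ independent of $t,\mu$ such that $s(t,\mu)\le\frac{C}{1+\mu\langle t\rangle}$ for all $t>0$, $\mu\ge0$.
   Context: $k>0$, $\alpha\in(0,1)$, $D^\alpha_{0^+}f(t)=\frac{1}{\Gamma(1-\alpha)}\frac{d}{dt}\int_0^t(t-s)^{-\alpha}f(s)ds$, $\langle t\rangle=t+kt^{1-\alpha}$. The function $t\mapsto s(t,\mu)$ is completely monotone (in particular nonnegative and nonincreasing). *)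

From HB Require Import structures.
From mathcomp Require Import all_boot all_order all_algebra.
From mathcomp Require Import all_classical all_reals all_analysis.
Set Implicit Arguments. Unset Strict Implicit. Unset Printing Implicit Defensive.
Import Order.TTheory GRing.Theory Num.Theory.
Import numFieldNormedType.Exports.
Local Open Scope classical_set_scope.
Local Open Scope ring_scope.

Definition Gamma {R : realType} (x : R) : R :=
  fine (\int[@lebesgue_measure R]_(t in `](0%R:R), +oo[%classic) (t `^ (x - 1) * expR (- t))%:E)%E.

Definition hker {R : realType} (k alpha : R) (t : R) : R :=
  1 + k * t `^ (- alpha) / Gamma (1 - alpha).

Definition bracket {R : realType} (k alpha : R) (t : R) : R :=
  t + k * t `^ (1 - alpha).

Definition is_relax_sol {R : realType} (k alpha mu : R) (sigma : R -> R) : Prop :=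
  {within `[(0%R:R), +oo[%classic, continuous sigma} /\
  forall t : R, 0 <= t ->
    (@lebesgue_measure R).-integrable `[(0%R:R), t]%classic
        (fun tau => (hker k alpha (t - tau) * sigma tau)%:E) /\
    ((sigma t)%:E + mu%:E *
       \int[@lebesgue_measure R]_(tau in `[(0%R:R), t]%classic)
           (hker k alpha (t - tau) * sigma tau)%:E = 1%:E)%E.

From HB Require Import structures.
From mathcomp Require Import all_boot all_order all_algebra.
From mathcomp Require Import all_classical all_reals all_analysis.
From mathcomp Require Import measurable_realfun ring lra.
Import Order.TTheory GRing.Theory Num.Theory.
Import numFieldNormedType.Exports.
Local Open Scope classical_set_scope.
Local Open Scope ring_scope.

(* Since [s] is nonincreasing in [t] and the kernel [h] is decreasing, the
   integrand [h (t - tau) * s tau] is at least [h t * s t] on [[0, t)], so the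
   integral equation gives [s t * (1 + mu * t * h t) <= 1].  Moreover
   [t * h t = t + (k / Gamma (1 - alpha)) * t ^ (1 - alpha)] is comparable to
   [<t> = t + k * t ^ (1 - alpha)] up to the factor [1 + Gamma (1 - alpha)],
   which gives the bound with [C = 1 + Gamma (1 - alpha)].  The only analytic
   input is [0 < Gamma (1 - alpha) < +oo], obtained by splitting the Gamma
   integral at [1]. *)

Section GammaPositive.
Context {R : realType}.
Local Notation mu := (@lebesgue_measure R).

Let continuous_powR (r x : R) : 0 < x -> {for x, continuous (fun y : R => y `^ r)}.
Proof.
move=> x0; apply: differentiable_continuous; apply/derivable1_diffP.
by apply: derivable_powR; rewrite in_itv/= andbT.
Qed.

Let measurable_powR_mul (x : R) (D : set (measurableTypeR R)) :
  measurable_fun D (fun t : R => (x * t `^ (x - 1))%:E).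
Proof.
apply/measurable_funTS/measurable_EFinP.
by apply: measurable_funM => //; exact: measurable_powR.
Qed.

Lemma integral_powR_itv1 (x a : R) : 0 < x -> 0 < a < 1 ->
  (\int[mu]_(t in `[a, 1%R]) (x * t `^ (x - 1))%:E = (1 - a `^ x)%:E)%E.
Proof.
move=> x0 /andP[a0 a1].
have a_pos t : a <= t -> 0 < t by exact: lt_le_trans.
rewrite (@continuous_FTC2 _ _ (fun y : R => y `^ x)) ?powR1 ?EFinB //.
- apply: continuous_in_subspaceT => t; rewrite inE/= in_itv/= => /andP[/a_pos t0 _].
  apply: (@continuousM _ R^o (fun=> x) (fun y : R => y `^ (x - 1))).
    exact: cst_continuous.
  exact: continuous_powR.
- split.
  + move=> t; rewrite in_itv/= => /andP[/ltW/a_pos t0 _].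
    by apply: derivable_powR; rewrite in_itv/= andbT.
  + exact/cvg_at_right_filter/continuous_powR.
  + exact/cvg_at_left_filter/continuous_powR/(lt_trans a0).
- move=> t; rewrite in_itv/= => /andP[/ltW/a_pos t0 _].
  by rewrite powR_derive1 // in_itv/= andbT.
Qed.

Lemma integral_powR_itv01_le1 (x : R) : 0 < x ->
  (\int[mu]_(t in `]0%R, 1%R]) (x * t `^ (x - 1))%:E <= 1)%E.
Proof.
move=> x0.
pose F (n : nat) : set R := `[n.+2%:R^-1, 1%R]%classic.
have FU : \bigcup_n F n = `]0%R, 1%R]%classic.
  rewrite eqEsubset; split.
  - move=> t [n _]; rewrite /F /= !in_itv/= => /andP[nt ->]; rewrite andbT.
    by apply: lt_le_trans nt; rewrite invr_gt0.
  - move=> t; rewrite /= in_itv/= => /andP[t0 t1].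
    exists (Num.truncn t^-1) => //; rewrite /F /= in_itv/= t1 andbT.
    rewrite -[leRHS]invrK lef_pV2 ?posrE ?invr_gt0 //.
    by apply/ltW/(lt_le_trans (truncnS_gt _)); rewrite ler_nat.
have F_nd : nondecreasing_seq F.
  move=> n m nm; apply/subsetPset => t; rewrite /F /= !in_itv/= => /andP[nt ->].
  by rewrite andbT (le_trans _ nt) // lef_pV2 ?posrE // ler_nat !ltnS.
have F_ge0 i t : F i t -> (0 <= (x * t `^ (x - 1))%:E)%E.
  by move=> _; rewrite lee_fin mulr_ge0 ?powR_ge0 // ltW.
have := @ge0_nondecreasing_set_cvg_integral _ _ _ _ _ mu F_nd (fun=> measurable_itv _)
  (fun=> measurable_powR_mul _ _) F_ge0.
rewrite FU => cvgF; rewrite -(cvg_lim _ cvgF) //.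
apply: lime_le; first by apply/cvg_ex; eexists; exact: cvgF.
near=> n; rewrite integral_powR_itv1 // ?lee_fin ?gerBl ?powR_ge0 //.
by rewrite invr_gt0 ltr0n /= invf_lt1 // ltr1n.
Unshelve. all: end_near.
Qed.

Let measurable_Gamma_integrand (x : R) (D : set (measurableTypeR R)) :
  measurable_fun D (fun t : R => (t `^ (x - 1) * expR (- t))%:E).
Proof.
apply/measurable_funTS/measurable_EFinP.
apply: measurable_funM; first exact: measurable_powR.
by apply: measurableT_comp; [exact: measurable_expR|exact: measurable_funN].
Qed.

Let integral_Gamma_split (x : R) :
  (\int[mu]_(t in `]0%R, +oo[) (t `^ (x - 1) * expR (- t))%:E =
   \int[mu]_(t in `]0%R, 1%R]) (t `^ (x - 1) * expR (- t))%:E +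
   \int[mu]_(t in `]1%R, +oo[) (t `^ (x - 1) * expR (- t))%:E)%E.
Proof.
have -> : `]0%R, +oo[%classic = `]0%R, 1%R] `|` `]1%R, +oo[ :> set R.
  by apply: (@itv_bndbnd_setU _ _ (BRight 0%R) (BRight 1%R) +oo%O); rewrite bnd_simp.
rewrite ge0_integral_setU //.
- by move=> t _; rewrite lee_fin mulr_ge0 ?powR_ge0 ?expR_ge0.
- apply/disj_setPS => t [] /=; rewrite !in_itv/= => /andP[_ t1] /andP[t2 _].
  by move: (le_lt_trans t1 t2); rewrite ltxx.
Qed.

Lemma Gamma_integral_ge (x : R) : 0 < x <= 1 ->
  ((expR (-1))%:E <= \int[mu]_(t in `]0%R, +oo[) (t `^ (x - 1) * expR (- t))%:E)%E.
Proof.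
move=> /andP[x0 x1]; rewrite integral_Gamma_split.
rewrite -[leLHS]adde0 leeD ?integral_ge0 //; last first.
  by move=> t _; rewrite lee_fin mulr_ge0 ?powR_ge0 ?expR_ge0.
have -> : (expR (-1))%:E = (\int[mu]_(t in `]0%R, 1%R]) (expR (-1))%:E)%E.
  have mu01 : mu (`]0%R, 1%R]%classic : set R) = 1%E.
    by rewrite lebesgue_measure_itv /= lte_fin ltr01 oppr0 adde0.
  by rewrite integral_cst // -[LHS]mule1; congr (_ * _)%E; exact/esym/mu01.
apply: ge0_le_integral => // t; rewrite /= in_itv/= => /andP[t0 t1]; rewrite lee_fin.
rewrite -[leLHS]mul1r ler_pM ?expR_ge0 ?ler_expR ?lerN2 //.
by rewrite -[leLHS](powRr0 t) ger_powR ?t0 // subr_le0.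
Qed.

Lemma Gamma_integral_lt_pinfty (x : R) : 0 < x <= 1 ->
  (\int[mu]_(t in `]0%R, +oo[) (t `^ (x - 1) * expR (- t))%:E < +oo)%E.
Proof.
move=> /andP[x0 x1]; rewrite integral_Gamma_split lte_add_pinfty //.
- apply: (@le_lt_trans _ _ (x^-1)%:E); last exact: ltry.
  apply: (@le_trans _ _
      (\int[mu]_(t in `]0%R, 1%R]) (x^-1%:E * (x * t `^ (x - 1))%:E))%E).
    apply: ge0_le_integral => //.
    + by move=> t _; rewrite lee_fin mulr_ge0 ?powR_ge0 ?expR_ge0.
    + by apply: measurable_funeM; exact: measurable_powR_mul.
    + move=> t; rewrite /= in_itv/= => /andP[t0 t1].
      rewrite -EFinM lee_fin mulrA mulVf ?gt_eqF // mul1r.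
      by rewrite -[leRHS]mulr1 ler_pM ?powR_ge0 ?expR_ge0 // expR_le1 oppr_le0 ltW.
  rewrite ge0_integralZl_EFin ?invr_ge0 ?(ltW x0) //.
  + rewrite -[leRHS]mule1 lee_wpmul2l ?lee_fin ?invr_ge0 ?(ltW x0) //.
    exact: integral_powR_itv01_le1.
  + by move=> t _; rewrite lee_fin mulr_ge0 ?powR_ge0 // ltW.
- apply: (@le_lt_trans _ _ (\int[mu]_t (exponential_pdf 1 t)%:E)%E); last first.
    by rewrite integral_exponential_pdf // ltry.
  have mexp (D : set (measurableTypeR R)) :
      measurable_fun D (fun t : R => (exponential_pdf 1 t)%:E).
    by apply/measurable_funTS/measurable_EFinP; exact: measurable_exponential_pdf.
  apply: (@le_trans _ _ (\int[mu]_(t in `]1%R, +oo[) (exponential_pdf 1 t)%:E)%E).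
    apply: ge0_le_integral => //.
      by move=> t _; rewrite lee_fin mulr_ge0 ?powR_ge0 ?expR_ge0.
    move=> t; rewrite /= in_itv/= andbT => t1.
    have t0 : 0 < t := lt_trans ltr01 t1.
    rewrite lee_fin exponential_pdfE ?(ltW t0) // mul1r mulN1r.
    rewrite -[leRHS]mul1r ler_pM ?powR_ge0 ?expR_ge0 //.
    by rewrite -[leRHS](powRr0 t) ler_powR ?(ltW t1) // subr_le0.
  by apply: ge0_subset_integral => // t _; rewrite lee_fin exponential_pdf_ge0.
Qed.

End GammaPositive.

(* [Gamma] is defined through [fine], which sends [+oo] to [0]: positivity
   needs the finiteness of the integral as well. *)
Lemma Gamma_gt0 {R : realType} (x : R) : 0 < x <= 1 -> 0 < Gamma x.
Proof.
move=> x01; rewrite /Gamma; apply: fine_gt0.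
rewrite Gamma_integral_lt_pinfty // andbT.
by apply: lt_le_trans (Gamma_integral_ge _ x01); rewrite lte_fin expR_gt0.
Qed.

Lemma integral_itv_ge_mul {R : realType} (a b c : R) (f : R -> \bar R) :
  a <= b -> 0 <= c -> measurable_fun `[a, b] f ->
  (forall x, a <= x < b -> (c%:E <= f x)%E) ->
  ((c * (b - a))%:E <= \int[@lebesgue_measure R]_(x in `[a, b]) f x)%E.
Proof.
move=> ab c0 mf cf.
have mf' : measurable_fun `[a, b[ f.
  by apply: measurable_funS mf => // x /=; rewrite !in_itv/= => /andP[-> /ltW ->].
have mu_ab : lebesgue_measure (`[a, b[%classic : set R) = (b - a)%:E.
  rewrite lebesgue_measure_itv /= lte_fin -EFinD.
  by case: ltgtP ab => // -> _; rewrite subrr.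
rewrite -(integral_itv_bndo_bndc mf').
have -> : (c * (b - a))%:E = (\int[lebesgue_measure]_(x in `[a, b[) c%:E)%E.
  by rewrite integral_cst // EFinM; congr (_ * _)%E; exact/esym/mu_ab.
by apply: ge0_le_integral.
Qed.

Lemma bracket_ge0 {R : realType} (k alpha t : R) :
  0 <= k -> 0 <= t -> 0 <= bracket k alpha t.
Proof. by move=> k0 t0; rewrite addr_ge0 ?mulr_ge0 ?powR_ge0. Qed.

Lemma bracket_le_scale {R : realType} (k alpha c t : R) : 0 <= k -> 0 < c -> 0 <= t ->
  bracket k alpha t <= (1 + c) * bracket (k / c) alpha t.
Proof.
move=> k0 c0 t0; rewrite /bracket.
have A0 : 0 <= t `^ (1 - alpha) by exact: powR_ge0.
have d0 : 0 <= k / c by rewrite divr_ge0 // ltW.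
have {1}-> : k = c * (k / c) by rewrite mulrCA divff ?gt_eqF ?mulr1.
move: A0 d0; set A := t `^ _; set d := k / c => A0 d0.
nra.
Qed.

Section RelaxationEstimate.
Context {R : realType}.
Variables (k alpha : R).
Hypotheses (k_ge0 : 0 <= k) (alpha_ge0 : 0 <= alpha) (alpha_lt1 : alpha < 1).

Local Notation G := (Gamma (1 - alpha)).

Let G_gt0 : 0 < G.
Proof. by apply: Gamma_gt0; rewrite subr_gt0 alpha_lt1 gerBl. Qed.

Lemma hker_ge0 (x : R) : 0 <= hker k alpha x.
Proof. by rewrite addr_ge0 // divr_ge0 ?mulr_ge0 ?powR_ge0 // ltW. Qed.

Lemma hker_antitone (x y : R) : 0 < x -> x <= y -> hker k alpha y <= hker k alpha x.
Proof.
move=> x0 xy; rewrite lerD2l ler_pM2r ?invr_gt0 // ler_wpM2l //.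
rewrite !powRN lef_pV2 ?posrE ?powR_gt0 ?(lt_le_trans x0) //.
by apply: ge0_ler_powR; rewrite // nnegrE ltW // (lt_le_trans x0).
Qed.

Lemma mul_hker (t : R) : 0 < t -> t * hker k alpha t = bracket (k / G) alpha t.
Proof.
move=> t0; rewrite /hker /bracket [t `^ (1 - alpha)]powRD ?(gt_eqF t0) ?implybT //.
by rewrite powRr1 ?(ltW t0) //; ring.
Qed.

Lemma relax_sol_mul_bracket_le1 (mu t : R) (sigma : R -> R) :
  0 <= mu -> 0 < t -> is_relax_sol k alpha mu sigma -> 0 <= sigma t ->
  (forall tau, 0 <= tau <= t -> sigma t <= sigma tau) ->
  sigma t * (1 + mu * bracket (k / G) alpha t) <= 1.
Proof.
move=> mu0 t0 [_ /(_ t (ltW t0))[int_t eq_t]] sigma_t0 sigma_antitone.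
set I := (\int[_]_(_ in _) _)%E in eq_t.
have I_fin : I \is a fin_num by exact: integrable_fin_num.
have [mf _] := integrableP _ _ _ int_t.
have I_ge : ((sigma t * hker k alpha t * (t - 0))%:E <= I)%E.
  apply: integral_itv_ge_mul; rewrite ?mulr_ge0 ?hker_ge0 ?(ltW t0) //.
  move=> tau /andP[tau0 taut]; rewrite lee_fin.
  rewrite mulrC; apply: ler_pM; rewrite ?hker_ge0 //.
    by apply: hker_antitone; rewrite ?subr_gt0 ?gerBl.
  by apply: sigma_antitone; rewrite tau0 ltW.
have {}eq_t : sigma t + mu * fine I = 1.
  by apply: EFin_inj; rewrite EFinD EFinM fineK.
rewrite subr0 -(fineK I_fin) lee_fin in I_ge.
rewrite -[leRHS]eq_t mulrDr mulr1 lerD2l -mul_hker //.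
by rewrite mulrCA ler_wpM2l // (mulrC t) mulrA.
Qed.

End RelaxationEstimate.

Theorem mainTheorem8 (R : realType) (k alpha : R) (hk : 0 < k)
  (ha0 : 0 < alpha) (ha1 : alpha < 1) (s : R -> R -> R)
  (hs : forall mu : R, 0 <= mu -> is_relax_sol k alpha mu (s ^~ mu))
  (hs_nonneg : forall mu t : R, 0 <= mu -> 0 <= t -> 0 <= s t mu)
  (hs_noninc : forall mu t1 t2 : R, 0 <= mu -> 0 <= t1 -> t1 <= t2 ->
                 s t2 mu <= s t1 mu) :
  exists C : R, 0 < C /\
    forall t mu : R, 0 < t -> 0 <= mu ->
      s t mu <= C / (1 + mu * bracket k alpha t).
Proof.
set G := Gamma (1 - alpha).
have G_gt0 : 0 < G by apply: Gamma_gt0; rewrite subr_gt0 ha1 gerBl ltW.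
exists (1 + G); split; first by rewrite addr_gt0.
move=> t mu t0 mu0.
have st_ge0 := hs_nonneg mu t mu0 (ltW t0).
have st_le1 : s t mu * (1 + mu * bracket (k / G) alpha t) <= 1.
  apply: (@relax_sol_mul_bracket_le1 R k alpha (ltW hk) (ltW ha0) ha1 mu t (s ^~ mu)
    mu0 t0 (hs mu mu0) st_ge0).
  by move=> tau /andP[tau0 taut]; apply: hs_noninc.
have br : bracket k alpha t <= (1 + G) * bracket (k / G) alpha t.
  by apply: bracket_le_scale; rewrite ?ltW.
have b_ge0 : 0 <= bracket k alpha t by rewrite bracket_ge0 ?ltW.
rewrite ler_pdivlMr ?ltr_pwDl ?mulr_ge0 //.
rewrite -[leRHS]mulr1; apply: le_trans (ler_wpM2l (ltW (addr_gt0 ltr01 G_gt0)) st_le1).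
have := mulr_ge0 (ltW G_gt0) st_ge0.
move: (ler_wpM2l (mulr_ge0 st_ge0 mu0) br).
set b := bracket k _ t; set b' := bracket _ _ t.
lra.
Qed.
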